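(* Assume $\mathbf{P}$ is hierarchical, $K$ is a field, and $\tau_{(i)}\neq0$, $\eta_{(i)}\neq-1_K$ for all $i\in\Omega$. Let $D,C\in\mathcal{I}(\overline{\mathbf{P}})$. Then $\pi(\Omega,C)=\pi(\Omega,D)$ if and only if there exists a bijection $\varepsilon:C\to D$ with $\eta_{(i)}=\eta_{(\varepsilon(i))}$ for all $i\in C$.
   Context: $\Omega$ is a finite set and $\mathbf{P}=(\Omega,\preccurlyeq_{\mathbf{P}})$ a poset; $\overline{\mathbf{P}}$ is the dual poset and $\mathcal{I}(\overline{\mathbf{P}})$ its set of ideals (up-closed subsets of $\mathbf{P}$). For $Y\subseteq\Omega$: $\max(Y)$ is the set of maximal elements of $Y$ w.r.t. $\preccurlyeq_{\mathbf{P}}$; $\mathcal{I}(Y)$ is the set of down-closed subsets of $Y$. $\tau,\eta\in K^{\Omega}$. For $D,I\subseteq\Omega$, $\varphi(D,I)=(-1)^{|I\cap D|}\big(\prod_{i\in I-\max(I)}\tau_{(i)}\big)\big(\prod_{i\in\max(I)-D}\eta_{(i)}\big)$ if $I\cap D\subseteq\max(I)$, and $0$ otherwise; for $D\subseteq Y\subseteq\Omega$, $\pi(Y,D)=\sum_{I\in\mathcal{I}(Y)}\varphi(D,I)x^{|I|}\in K[x]$. $\mathrm{len}(y)$ is the largest cardinality of a chain in $\mathbf{P}$ with greatest element $y$; $\mathbf{P}$ is hierarchical if $\mathrm{len}(u)+1\leqslant\mathrm{len}(v)$ implies $u\preccurlyeq_{\mathbf{P}}v$. *)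

From HB Require Import structures.
From mathcomp Require Import all_boot all_order all_algebra.
Set Implicit Arguments. Unset Strict Implicit. Unset Printing Implicit Defensive.
Import GRing.Theory.
Local Open Scope ring_scope.

Definition partial_order (T : finType) (le : rel T) : Prop :=
  [/\ reflexive le, antisymmetric le & transitive le].

Definition maxset_le (T : finType) (le : rel T) (Y : {set T}) : {set T} :=
  [set i in Y | [forall j in Y, le i j ==> (j == i)]].

(* ideals of the dual poset = up-closed subsets of P *)
Definition dual_ideal (T : finType) (le : rel T) (D : {set T}) : bool :=
  [forall i in D, forall j, le i j ==> (j \in D)].

Definition down_closed_in (T : finType) (le : rel T) (Y I : {set T}) : bool :=
  (I \subset Y) && [forall i in I, forall j in Y, le j i ==> (j \in I)].

Definition phi (T : finType) (le : rel T) (K : fieldType) (tau eta : T -> K)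
    (D I : {set T}) : K :=
  if (I :&: D) \subset maxset_le le I then
    (-1) ^+ #|I :&: D|
    * (\prod_(i in I :\: maxset_le le I) tau i)
    * (\prod_(i in maxset_le le I :\: D) eta i)
  else 0.

Definition pi_poly (T : finType) (le : rel T) (K : fieldType) (tau eta : T -> K)
    (Y D : {set T}) : {poly K} :=
  \sum_(I : {set T} | down_closed_in le Y I) phi le tau eta D I *: 'X^#|I|.

Definition chain (T : finType) (le : rel T) (S : {set T}) : bool :=
  [forall x in S, forall y in S, le x y || le y x].

Definition len (T : finType) (le : rel T) (y : T) : nat :=
  \max_(S : {set T} | chain le S && (y \in S) && [forall x in S, le x y]) #|S|.

Definition hierarchical (T : finType) (le : rel T) : Prop :=
  forall u v, (len le u + 1 <= len le v)%N -> le u v.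

From HB Require Import structures.
From mathcomp Require Import all_boot all_order all_algebra.
Set Implicit Arguments. Unset Strict Implicit. Unset Printing Implicit Defensive.
Import GRing.Theory.
Local Open Scope ring_scope.

(* In a hierarchical poset [x <= y] iff [x = y] or [len x < len y], so the poset is a
   stack of antichains, its levels.  A nonempty down-set is [B :|: S], where [B] is the
   union of the levels below some level [k] and [S] is a nonempty subset of level [k],
   namely its set of maximal elements.  Summing [phi] over these sets gives
     pi(Omega, D) = 1 + sum_k [B_k, D disjoint] (prod_(B_k) tau) X^|B_k|
                               (prod_(i in level k) (1 + c_i X) - 1),
   with [c_i = -1] on [D] and [c_i = eta i] off [D], and the [k]-th summand only has
   monomials of degree in (|B_k|, |B_(k+1)|].  So [pi(Omega, C) = pi(Omega, D)] iff the
   summands agree level by level.  As [tau] does not vanish, this says that the products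
   of linear factors agree, i.e. that the multisets of the [c_i] agree; as [eta] avoids
   [-1], this is the equality of the [eta]-multisets of [C] and [D] on each level.
   Finally two up-sets of the same size can only differ on a single level, so the
   levelwise statement is equivalent to the equality of the [eta]-multisets of [C] and
   [D], that is, to the existence of an [eta]-preserving bijection. *)

Section Fibers.
Variables (T : finType) (V : eqType).
Implicit Types (A B : {set T}) (f g : T -> V).

Definition fiber_card f A v : nat := #|[set i in A | f i == v]|.

Lemma fiber_card_sum f A v : fiber_card f A v = (\sum_(i in A) (f i == v))%N.
Proof.
rewrite /fiber_card -sum1dep_card big_mkcondr /=.
by apply: eq_bigr => i _; case: (f i == v).
Qed.

Lemma fiber_cardID f A B v :
  fiber_card f A v = (fiber_card f (A :&: B) v + fiber_card f (A :\: B) v)%N.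
Proof. by rewrite !fiber_card_sum (big_setID B). Qed.

(* The element of [A] of rank [r] among those with [f]-value [v] is sent to the element
   of [B] of rank [r] among those with [g]-value [v]. *)
Definition rank_match A B f g (i : T) : T :=
  nth i (enum [set j in B | g j == f i]) (index i (enum [set j in A | f j == f i])).

Lemma rank_matchP A B f g : fiber_card f A =1 fiber_card g B ->
  forall i, i \in A -> [/\ rank_match A B f g i \in B, g (rank_match A B f g i) = f i
                         & rank_match B A g f (rank_match A B f g i) = i].
Proof.
move=> fAB i iA; rewrite {1 2 4}/rank_match.
set sA := enum [set j in A | f j == f i]; set sB := enum [set j in B | g j == f i].
have i_sA : i \in sA by rewrite mem_enum inE iA eqxx.
have rank_lt : (index i sA < size sB)%N.
  by rewrite -cardE -[#|_|]/(fiber_card g B (f i)) -fAB /fiber_card cardE index_mem.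
have : nth i sB (index i sA) \in sB by apply: mem_nth.
rewrite mem_enum inE => /andP[jB /eqP gj]; split => //.
rewrite /rank_match gj -/sA -/sB index_uniq ?enum_uniq //.
by rewrite (set_nth_default i) ?index_mem //; apply: nth_index.
Qed.

Lemma fibers_sig_bijection A B f g : fiber_card f A =1 fiber_card g B ->
  exists e : {x | x \in A} -> {x | x \in B},
    bijective e /\ forall x, f (sval x) = g (sval (e x)).
Proof.
move=> fAB; have fBA : fiber_card g B =1 fiber_card f A by move=> v; rewrite fAB.
have eB (x : {x | x \in A}) : rank_match A B f g (sval x) \in B.
  by case: (rank_matchP fAB (svalP x)).
have e'A (y : {y | y \in B}) : rank_match B A g f (sval y) \in A.
  by case: (rank_matchP fBA (svalP y)).
pose e x := exist (fun y => y \in B) _ (eB x).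
pose e' y := exist (fun x => x \in A) _ (e'A y).
exists e; split; last by move=> x /=; case: (rank_matchP fAB (svalP x)).
exists e' => [x | y]; apply: val_inj => /=.
  by case: (rank_matchP fAB (svalP x)).
by case: (rank_matchP fBA (svalP y)).
Qed.

Lemma sig_bijection_fibers A B f g (e : {x | x \in A} -> {x | x \in B}) :
  bijective e -> (forall x, f (sval x) = g (sval (e x))) ->
  fiber_card f A =1 fiber_card g B.
Proof.
move=> e_bij fe v; rewrite !fiber_card_sum (big_sub A) (big_sub B) [RHS](reindex e) /=.
  by apply: eq_bigr => x _; rewrite fe.
exact: onW_bij.
Qed.

Lemma big_fibers_eq (R : Type) (idx : R) (op : Monoid.com_law idx) A B f g (F : V -> R) :
  fiber_card f A =1 fiber_card g B ->
  \big[op/idx]_(i in A) F (f i) = \big[op/idx]_(j in B) F (g j).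
Proof.
move=> /fibers_sig_bijection[e [e_bij fe]]; rewrite (big_sub A) (big_sub B) [RHS](reindex e) /=.
  by apply: eq_bigr => x _; rewrite fe.
exact: onW_bij.
Qed.

Lemma fibers_card A B f g : fiber_card f A =1 fiber_card g B -> #|A| = #|B|.
Proof. by move=> /(big_fibers_eq addn (fun=> 1%N)); rewrite !sum1_card. Qed.

End Fibers.

Lemma prod1D_subsets (R : comPzRingType) (T : finType) (L : {set T}) (G : T -> R) :
  \prod_(i in L) (1 + G i) = \sum_(S : {set T} | S \subset L) \prod_(i in S) G i.
Proof.
pose F i := if i \in L then G i else 0.
transitivity (\prod_i (F i + 1)).
  by rewrite big_mkcond; apply: eq_bigr => i _; rewrite /F; case: ifP => _; rewrite addrC ?addr0.
rewrite bigA_distr (bigID (fun S : {set T} => S \subset L)) /= [X in _ + X]big1 ?addr0.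
  apply: eq_bigr => S SL; rewrite [RHS]big_mkcond; apply: eq_bigr => i _.
  by case: ifP => // iS; rewrite /F (subsetP SL).
by move=> S /subsetPn[i iS iL]; rewrite (bigD1 i) //= iS /F (negbTE iL) mul0r.
Qed.

Lemma coef_Xn_mul_window (R : nzRingType) (p : {poly R}) a m j :
  p`_0 = 0 -> (size p <= m.+1)%N -> ('X^a * p)`_j != 0 -> (a < j <= a + m)%N.
Proof.
move=> p0 size_p; rewrite coefXnM; case: ltnP => [_|_ pj]; first by rewrite eqxx.
have j_a_gt0 : (0 < j - a)%N by rewrite lt0n; apply: contraNneq pj => ->; rewrite p0.
have j_a_lt : (j - a < size p)%N by rewrite ltnNge; apply: contra pj => /leq_sizeP->.
by rewrite -subn_gt0 j_a_gt0 -leq_subLR -ltnS (leq_trans j_a_lt).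
Qed.

Lemma eq_windowed_sums (R : nzRingType) n (p q : nat -> {poly R}) (lo hi : nat -> nat) :
  (forall k k', (k < k')%N -> (hi k <= lo k')%N) ->
  (forall k j, (p k)`_j != 0 -> (lo k < j <= hi k)%N) ->
  (forall k j, (q k)`_j != 0 -> (lo k < j <= hi k)%N) ->
  \sum_(k < n) p k = \sum_(k < n) q k -> forall k, (k < n)%N -> p k = q k.
Proof.
move=> windows_sorted p_window q_window sum_pq k0 k0n; apply/polyP => j.
have coef_out (r : nat -> {poly R}) k :
    (forall k j, (r k)`_j != 0 -> (lo k < j <= hi k)%N) ->
    ~~ (lo k < j <= hi k)%N -> (r k)`_j = 0.
  by move=> r_window; apply: contraNeq; apply: r_window.
have [j_in|j_out] := boolP (lo k0 < j <= hi k0)%N; last by rewrite (coef_out p) ?(coef_out q).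
have coef_sum_at (r : nat -> {poly R}) : (forall k j, (r k)`_j != 0 -> (lo k < j <= hi k)%N) ->
    (\sum_(k < n) r k)`_j = (r k0)`_j.
  move=> r_window; rewrite coef_sum (bigD1 (Ordinal k0n)) //= big1 ?addr0 // => k k_neq.
  apply: coef_out r_window _; apply/negP => /andP[lo_j j_hi]; case/andP: j_in => lo0_j j_hi0.
  have : (k : nat) != k0 by apply: contraNneq k_neq => k_k0; apply/eqP/val_inj.
  case: ltngtP => // [k_lt|k_gt] _.
    by have := leq_ltn_trans j_hi (leq_ltn_trans (windows_sorted _ _ k_lt) lo0_j); rewrite ltnn.
  by have := leq_ltn_trans j_hi0 (leq_ltn_trans (windows_sorted _ _ k_gt) lo_j); rewrite ltnn.
by rewrite -(coef_sum_at p p_window) -(coef_sum_at q q_window) sum_pq.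
Qed.

Section LinearFactors.
Variables (K : fieldType) (T : finType).

Lemma lin_neq0 (c : K) : 1 + c *: 'X != 0 :> {poly K}.
Proof.
apply/eqP => /(congr1 (coefp 0)) /=.
by rewrite coefD coefZ coefX coef1 mulr0 addr0 coef0 => /eqP; rewrite oner_eq0.
Qed.

Lemma size_lin (c : K) : size (1 + c *: 'X) = (c != 0).+1.
Proof. by rewrite addrC -mul_polyC -polyC1 size_MXaddC polyC_eq0 oner_eq0 andbF size_polyC. Qed.

Lemma mup_lin (x c : K) : mup x (1 + c *: 'X) = (1 + c * x == 0).
Proof.
have [->|c0] := eqVneq c 0.
  by rewrite scale0r addr0 mul0r addr0 oner_eq0 mupNroot // /root hornerC oner_eq0.
have -> : 1 + c *: 'X = c%:P * ('X - (- c^-1)%:P).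
  by rewrite polyCN opprK mulrDr mul_polyC -polyCM mulfV // addrC polyC1.
rewrite mupM ?polyC_eq0 ?polyXsubC_eq0 // mupNroot ?add0n; last by rewrite /root hornerC.
rewrite -['X - _]expr1 mup_XsubCX -(inj_eq (mulfI c0)) mulrN mulfV // eq_sym -subr_eq0 opprK addrC.
by case: (_ == 0).
Qed.

Lemma mup_prod_lin (x : K) (L : {set T}) (c : T -> K) :
  mup x (\prod_(i in L) (1 + c i *: 'X)) = (\sum_(i in L) ((1 + c i * x == 0)%R : nat))%N.
Proof.
suff [] : \prod_(i in L) (1 + c i *: 'X) != 0 /\
    mup x (\prod_(i in L) (1 + c i *: 'X)) = (\sum_(i in L) ((1 + c i * x == 0)%R : nat))%N by [].
apply: (big_rec2 (fun m p => p != 0 /\ mup x p = m)).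
  by rewrite oner_neq0 mupNroot ?root1.
move=> i m p _ [p_neq0 mup_p]; split; first by rewrite mulf_neq0 ?lin_neq0.
by rewrite mupM ?lin_neq0 // mup_lin mup_p.
Qed.

Lemma size_prod_lin (L : {set T}) (c : T -> K) :
  size (\prod_(i in L) (1 + c i *: 'X)) = (\sum_(i in L) (c i != 0%R : nat)).+1%N.
Proof.
rewrite size_prod => [|i _]; last exact: lin_neq0.
under eq_bigr do rewrite size_lin -add1n.
by rewrite big_split /= sum1_card -addnS addKn.
Qed.

(* A nonzero value [v] is counted by the multiplicity of the root [-1/v], and the value
   [0] by the drop in degree. *)
Lemma prod_lin_fibers (L : {set T}) (c c' : T -> K) :
  \prod_(i in L) (1 + c i *: 'X) = \prod_(i in L) (1 + c' i *: 'X) ->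
  fiber_card c L =1 fiber_card c' L.
Proof.
move=> eq_prod v; have [->|v_neq0] := eqVneq v 0.
  have zeros (d : T -> K) :
      fiber_card d L 0 = (#|L| - (size (\prod_(i in L) (1 + d i *: 'X))%R).-1)%N.
    rewrite size_prod_lin /= fiber_card_sum -sum1_card.
    rewrite [X in (X - _)%N](eq_bigr (fun i => (d i == 0%R : nat) + (d i != 0%R : nat))%N);
      last by move=> i _; case: (d i == 0).
    by rewrite big_split /= addnK.
  by rewrite !zeros eq_prod.
have roots (d : T -> K) :
    fiber_card d L v = mup (- v^-1) (\prod_(i in L) (1 + d i *: 'X)).
  rewrite mup_prod_lin fiber_card_sum; apply: eq_bigr => i _; congr nat_of_bool.
  rewrite mulrN -[RHS](inj_eq (mulIf v_neq0)) mulrBl -mulrA mulVf // mulr1 mul1r mul0r.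
  by rewrite subr_eq0 eq_sym.
by rewrite !roots eq_prod.
Qed.

End LinearFactors.

Section Hierarchical.
Variables (T : finType) (le : rel T).
Hypothesis le_order : partial_order le.
Local Notation lv := (len le).

Lemma len_witness x : exists2 S : {set T},
  chain le S && (x \in S) && [forall y in S, le y x] & lv x = #|S|.
Proof.
have [|S S_chain lenE] :=
  @eq_bigmax_cond _ [pred S : {set T} | chain le S && (x \in S) && [forall y in S, le y x]]
    (fun S => #|S|); last by exists S.
case: le_order => le_refl _ _; apply/card_gt0P; exists [set x]; rewrite inE set11 andbT.
apply/andP; split; last by apply/forall_inP => y /set1P ->.
by apply/forall_inP => y /set1P ->; apply/forall_inP => z /set1P ->; rewrite le_refl.
Qed.

Lemma chain_card_le_len x S :
  chain le S && (x \in S) && [forall y in S, le y x] -> (#|S| <= lv x)%N.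
Proof. exact: (@leq_bigmax_cond _ _ (fun S : {set T} => #|S|)). Qed.

Lemma len_lt_card x : (lv x < #|T|.+1)%N.
Proof. by rewrite ltnS; apply/bigmax_leqP => S _; apply: max_card. Qed.

Lemma len_lt x y : x != y -> le x y -> (lv x < lv y)%N.
Proof.
case: le_order => le_refl le_anti le_trans x_neq_y le_xy.
have [S /andP[/andP[S_chain xS] /forall_inP S_le_x] ->] := len_witness x.
have yS : y \notin S.
  by apply: contra x_neq_y => yS; rewrite (le_anti x y) // le_xy S_le_x.
have S_le_y z : z \in S -> le z y by move=> zS; apply: le_trans le_xy; apply: S_le_x.
have card_yS : #|y |: S| = #|S|.+1 by rewrite cardsU1 yS.
rewrite -card_yS; apply: chain_card_le_len.
rewrite setU11 andbT; apply/andP; split; last first.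
  by apply/forall_inP => z /setU1P[-> | /S_le_y]; rewrite ?le_refl.
apply/forall_inP => z /setU1P[-> | zS]; apply/forall_inP => w /setU1P[-> | wS].
- by rewrite le_refl.
- by rewrite S_le_y ?orbT.
- by rewrite S_le_y.
- by move/forall_inP: S_chain => /(_ z zS) /forall_inP; apply.
Qed.

Hypothesis le_hier : hierarchical le.

Lemma hierarchical_leE x y : le x y = (x == y) || (lv x < lv y)%N.
Proof.
case: le_order => le_refl _ _; have [-> | x_neq_y] := eqVneq x y; first by rewrite le_refl.
by apply/idP/idP => [/(len_lt x_neq_y) | lt_xy]; last by apply: le_hier; rewrite addn1.
Qed.

End Hierarchical.

Section Levels.
Variables (T : finType) (le : rel T).
Hypotheses (le_order : partial_order le) (le_hier : hierarchical le).
Local Notation lv := (len le).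
Local Notation N := #|T|.+1.
Local Notation leE := (hierarchical_leE le_order le_hier).

Definition below k := [set i | (lv i < k)%N].
Definition level k := [set i | lv i == k].
Definition top (I : {set T}) := \max_(i in I) lv i.

Lemma level_eq0 k : (N <= k)%N -> level k = set0.
Proof.
move=> N_le_k; apply/setP => i; rewrite !inE.
by apply/negbTE; rewrite neq_ltn (leq_trans (len_lt_card le i)).
Qed.

Lemma below_level_disjoint k : [disjoint below k & level k].
Proof. by rewrite -setI_eq0; apply/eqP/setP => i; rewrite !inE; case: ltngtP. Qed.

Lemma belowS k : below k.+1 = below k :|: level k.
Proof. by apply/setP => i; rewrite !inE ltnS leq_eqVlt orbC. Qed.

Lemma card_belowS k : #|below k.+1| = (#|below k| + #|level k|)%N.
Proof. by rewrite belowS cardsU (disjoint_setI0 (below_level_disjoint k)) cards0 subn0. Qed.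

Lemma top_ge (I : {set T}) i : i \in I -> (lv i <= top I)%N.
Proof. exact: (@leq_bigmax_cond _ (mem I) lv). Qed.

Lemma top_lt_card (I : {set T}) : (top I < N)%N.
Proof. by rewrite ltnS; apply/bigmax_leqP => i _; rewrite -ltnS len_lt_card. Qed.

Lemma down_closedE (I : {set T}) :
  down_closed_in le setT I = [forall i in I, forall j, (lv j < lv i)%N ==> (j \in I)].
Proof.
rewrite /down_closed_in subsetT /=; apply: (eq_forallb_in (D := fun i => i \in I)) => i iI.
apply: eq_forallb => j; rewrite in_setT /= leE.
by have [-> | _] := eqVneq j i; rewrite ?ltnn ?iI.
Qed.

Lemma maxsetE (I : {set T}) : maxset_le le I = I :&: level (top I).
Proof.
apply/setP => i; rewrite !inE; case iI: (i \in I) => //=.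
apply/forall_inP/idP => [i_max | /eqP top_i j jI].
  rewrite eqn_leq top_ge //=; apply/bigmax_leqP => j jI.
  rewrite leqNgt; apply/negP => lt_ij.
  have := i_max j jI; rewrite leE lt_ij orbT /= => /eqP j_i.
  by move: lt_ij; rewrite j_i ltnn.
by rewrite leE top_i ltnNge top_ge // orbF eq_sym implybb.
Qed.

Lemma down_closed_split (I : {set T}) :
  down_closed_in le setT I -> below (top I) :|: (I :&: level (top I)) = I.
Proof.
rewrite down_closedE => /forall_inP I_closed; apply/setP => i; rewrite !inE.
apply/idP/idP => [/orP[lt_i_top | /andP[] //] | iI]; last first.
  by rewrite iI andTb orbC -leq_eqVlt top_ge.
have [j jI top_j] : exists2 j, j \in I & top I = lv j.
  have I_neq0 : (0 < #|I|)%N.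
    by rewrite card_gt0; apply: contraTneq lt_i_top => ->; rewrite /top big_set0.
  by have [j] := @eq_bigmax_cond _ (mem I) lv I_neq0; exists j.
by move: (I_closed j jI) => /forallP/(_ i)/implyP; apply; rewrite -top_j.
Qed.

Section BelowAdd.
Variables (k : nat) (S : {set T}).
Hypothesis S_level : S \subset level k.

Lemma below_S_disjoint : [disjoint below k & S].
Proof. exact: disjointWr S_level (below_level_disjoint k). Qed.

Lemma down_closed_below_add : down_closed_in le setT (below k :|: S).
Proof.
rewrite down_closedE; apply/forall_inP => i iI; apply/forallP => j; apply/implyP => lt_ji.
rewrite !inE; apply/orP; left; case/setUP: iI => [| /(subsetP S_level)]; rewrite inE.
  exact: ltn_trans.
by move=> /eqP <-.
Qed.

Hypothesis S_neq0 : S != set0.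

Lemma top_below_add : top (below k :|: S) = k.
Proof.
have [s sS] := set0Pn _ S_neq0.
have lv_s : lv s = k by move/subsetP/(_ s sS): S_level; rewrite inE => /eqP.
apply/eqP; rewrite eqn_leq; apply/andP; split.
  apply/bigmax_leqP => i /setUP[| /(subsetP S_level)]; rewrite inE; first exact: ltnW.
  by move=> /eqP ->.
by rewrite -[k in (k <= _)%N]lv_s top_ge // inE sS orbT.
Qed.

Lemma maxset_below_add : maxset_le le (below k :|: S) = S.
Proof.
rewrite maxsetE top_below_add setIUl (disjoint_setI0 (below_level_disjoint k)) set0U.
exact/setIidPl.
Qed.

End BelowAdd.

Lemma sum_down_closed (R : nmodType) (F : {set T} -> R) :
  \sum_(I | down_closed_in le setT I) F I =
  F set0 + \sum_(k < N) \sum_(S : {set T} | (S \subset level k) && (S != set0)) F (below k :|: S).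
Proof.
rewrite (bigD1 set0) /=; last by rewrite down_closedE; apply/forall_inP => i; rewrite inE.
congr (_ + _); rewrite (partition_big (fun I => Ordinal (top_lt_card I)) xpredT) //=.
apply: eq_bigr => k _.
rewrite (reindex_onto (fun S => below k :|: S) (fun I => I :&: level k)) /=; last first.
  by move=> I /andP[/andP[I_closed _] /eqP <-]; apply: down_closed_split.
apply: eq_bigl => S; rewrite setIUl (disjoint_setI0 (below_level_disjoint k)) set0U.
have -> : (S :&: level k == S) = (S \subset level k).
  by apply/eqP/idP => [<- | /setIidPl //]; apply: subsetIr.
case S_level: (S \subset level k); rewrite ?andbF //= andbT.
have [-> | S_neq0] := eqVneq S set0; last first.
  rewrite down_closed_below_add // setU_eq0 (negPf S_neq0) andbF -val_eqE /=.
  by rewrite top_below_add ?eqxx.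
rewrite setU0; apply/negbTE/andP => -[/andP[_ /set0Pn[i]]]; rewrite inE => lt_ik.
move=> /eqP/(congr1 val) /= top_k; have k_gt0 : (0 < k)%N := leq_ltn_trans (leq0n _) lt_ik.
have : (top (below k) <= k.-1)%N.
  by apply/bigmax_leqP => j; rewrite inE => lt_jk; rewrite -ltnS prednK.
by rewrite top_k -ltnS prednK // ltnn.
Qed.

Lemma disjoint_belowS k (X : {set T}) :
  [disjoint below k.+1 & X] = [disjoint below k & X] && [disjoint level k & X].
Proof. by rewrite -!setI_eq0 belowS setIUl setU_eq0. Qed.

Lemma fiber_card_levels (V : eqType) (f : T -> V) A v :
  fiber_card f A v = (\sum_(k < N) fiber_card f (level k :&: A) v)%N.
Proof.
rewrite fiber_card_sum (partition_big (fun i => Ordinal (len_lt_card le i)) xpredT) //=.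
by apply: eq_bigr => k _; rewrite fiber_card_sum; apply: eq_bigl => i; rewrite !inE andbC.
Qed.

Variables (K : fieldType) (tau eta : T -> K).

(* [cf D i] is the weight [phi] gives to a maximal element [i], and [level_term D k] is
   the contribution to [pi_poly] of the down-sets whose maximal elements lie on level [k]
   (see [pi_poly_levels]). *)
Definition cf (D : {set T}) i : K := if i \in D then -1 else eta i.

Definition level_poly (D : {set T}) k : {poly K} := \prod_(i in level k) (1 + cf D i *: 'X).

Definition level_term (D : {set T}) k : {poly K} :=
  if [disjoint below k & D]
  then (\prod_(i in below k) tau i) *: ('X^#|below k| * (level_poly D k - 1))
  else 0.

Lemma prod_cf D (S : {set T}) :
  \prod_(i in S) cf D i = (-1) ^+ #|S :&: D| * \prod_(i in S :\: D) eta i.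
Proof.
rewrite (big_setID D) -prodr_const; congr (_ * _); apply: eq_bigr => i; rewrite inE /cf.
  by case/andP => _ ->.
by case/andP => /negPf ->.
Qed.

Lemma phi_below_add (D S : {set T}) k : S \subset level k -> S != set0 ->
  phi le tau eta D (below k :|: S) =
  if [disjoint below k & D] then (\prod_(i in below k) tau i) * \prod_(i in S) cf D i else 0.
Proof.
move=> S_level S_neq0; have S_disj := below_S_disjoint S_level.
rewrite /phi maxset_below_add //.
have -> : (below k :|: S) :\: S = below k by rewrite setDUl setDv setU0; apply/setDidPl.
have -> : ((below k :|: S) :&: D \subset S) = [disjoint below k & D].
  rewrite setIUl subUset subsetIl andbT; apply/idP/idP => [sub | disj]; last first.
    by rewrite (disjoint_setI0 disj) sub0set.
  by rewrite -setI_eq0 -subset0 -(disjoint_setI0 S_disj) subsetI subsetIl.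
by case: ifP => // disj; rewrite setIUl (disjoint_setI0 disj) set0U prod_cf -mulrA mulrCA.
Qed.

Lemma level_poly_sub1 D k : level_poly D k - 1 =
  \sum_(S : {set T} | (S \subset level k) && (S != set0)) (\prod_(i in S) cf D i) *: 'X^#|S|.
Proof.
rewrite /level_poly prod1D_subsets (bigD1 set0) ?sub0set //= big_set0 addrAC subrr add0r.
by apply: eq_bigr => S _; rewrite scaler_prodr.
Qed.

Lemma pi_poly_levels D : pi_poly le tau eta setT D = 1 + \sum_(k < N) level_term D k.
Proof.
rewrite /pi_poly sum_down_closed; congr (_ + _).
  by rewrite /phi maxsetE !set0I sub0set cards0 !set0D !big_set0 !expr0 !mulr1 scale1r.
apply: eq_bigr => k _; rewrite /level_term; case: ifP => disj; last first.
  by apply: big1 => S /andP[S_level S_neq0]; rewrite phi_below_add // disj scale0r.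
rewrite level_poly_sub1 mulr_sumr scaler_sumr; apply: eq_bigr => S /andP[S_level S_neq0].
rewrite phi_below_add // disj cardsU (disjoint_setI0 (below_S_disjoint S_level)) cards0 subn0.
by rewrite exprD -scalerAr scalerA.
Qed.

Lemma level_term_window D k j :
  (level_term D k)`_j != 0 -> (#|below k| < j <= #|below k.+1|)%N.
Proof.
rewrite /level_term card_belowS; case: ifP => _; last by rewrite coef0 eqxx.
rewrite coefZ mulf_eq0 negb_or => /andP[_]; apply: coef_Xn_mul_window.
  rewrite coefB coef1 -horner_coef0 horner_prod big1 ?subrr // => i _.
  by rewrite hornerD hornerC hornerZ hornerX mulr0 addr0.
rewrite (leq_trans (size_polyD _ _)) // geq_max size_polyN size_poly1 size_prod_lin !ltnS /=.
by rewrite -sum1_card leq_sum // => i _; apply: leq_b1.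
Qed.

Lemma level_term_eq0 D k : (N <= k)%N -> level_term D k = 0.
Proof.
move=> N_le_k; rewrite /level_term /level_poly level_eq0 // big_set0 subrr mulr0.
by rewrite scaler0 if_same.
Qed.

Lemma pi_poly_eqE C D : pi_poly le tau eta setT C = pi_poly le tau eta setT D <->
  forall k, level_term C k = level_term D k.
Proof.
rewrite !pi_poly_levels; split => [/addrI eq_sums k | eq_terms]; last first.
  by congr (_ + _); apply: eq_bigr => k _.
have [k_lt | N_le_k] := ltnP k N; last by rewrite !level_term_eq0.
apply: (eq_windowed_sums (lo := fun k => #|below k|) (hi := fun k => #|below k.+1|))
  eq_sums k k_lt.
- by move=> k1 k2 lt_k12; apply/subset_leq_card/subsetP => i; rewrite !inE => /leq_trans; apply.
- exact: level_term_window.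
- exact: level_term_window.
Qed.

Lemma up_closed_above (X : {set T}) k :
  dual_ideal le X -> ~~ [disjoint below k & X] -> ~: below k \subset X.
Proof.
move=> /forall_inP X_up; rewrite -setI_eq0 => /set0Pn[x]; rewrite !inE => /andP[lt_xk xX].
apply/subsetP => i; rewrite !inE -leqNgt => le_ki.
move/forallP/(_ i)/implyP: (X_up x xX); apply.
by rewrite leE (leq_trans lt_xk le_ki) orbT.
Qed.

Lemma level_sub_up_closed (X : {set T}) k :
  dual_ideal le X -> ~~ [disjoint below k & X] -> level k \subset X.
Proof.
move=> X_up X_below; apply: subset_trans (up_closed_above X_up X_below).
by rewrite -disjoints_subset disjoint_sym below_level_disjoint.
Qed.

Lemma up_closed_proper (C D : {set T}) k : dual_ideal le D ->
  [disjoint below k & C] -> ~~ [disjoint below k & D] -> C \proper D.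
Proof.
move=> D_up C_above D_below; apply/properP; split.
  apply: subset_trans (up_closed_above D_up D_below).
  by rewrite -disjoints_subset disjoint_sym.
move: D_below; rewrite -setI_eq0 => /set0Pn[x]; rewrite inE => /andP[x_below xD].
by exists x => //; rewrite (disjointFr C_above).
Qed.

Lemma fiber_card_above_split (V : eqType) (f : T -> V) X k v :
  fiber_card f (X :\: below k) v =
  (fiber_card f (level k :&: X) v + fiber_card f (X :\: below k.+1) v)%N.
Proof.
rewrite (fiber_cardID _ _ (below k.+1)).
by congr (_ + _)%N; congr fiber_card; apply/setP => i; rewrite !inE ltnS;
  case: ltngtP; rewrite ?andbF ?andbT.
Qed.

Lemma up_closed_fibersE (C D : {set T}) : dual_ideal le C -> dual_ideal le D ->
  (forall k, fiber_card eta (level k :&: C) =1 fiber_card eta (level k :&: D)) <->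
  fiber_card eta C =1 fiber_card eta D.
Proof.
move=> C_up D_up; split => [eq_levels v | eq_fibers].
  by rewrite !fiber_card_levels; apply: eq_bigr => k _; apply: eq_levels.
(* An up-set either avoids [below k] or contains everything outside it, and two up-sets
   of the same size fall in the same case. *)
have eq_above k : fiber_card eta (C :\: below k) =1 fiber_card eta (D :\: below k).
  have [dC|ndC] := boolP [disjoint below k & C]; have [dD|ndD] := boolP [disjoint below k & D].
  - by move: dC dD; rewrite !(disjoint_sym (below k)) => /setDidPl-> /setDidPl->.
  - by have := proper_card (up_closed_proper D_up dC ndD); rewrite (fibers_card eq_fibers) ltnn.
  - by have := proper_card (up_closed_proper C_up dD ndC); rewrite (fibers_card eq_fibers) ltnn.
  by rewrite !setDE !(setIidPr (up_closed_above _ _)).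
move=> k v; apply/eqP; rewrite -(eqn_add2r (fiber_card eta (C :\: below k.+1) v)).
by rewrite -fiber_card_above_split eq_above fiber_card_above_split eq_above.
Qed.

Hypothesis tau_neq0 : forall i, tau i != 0.
Hypothesis eta_neqN1 : forall i, eta i != -1.

Lemma fiber_eta_N1 (A : {set T}) : fiber_card eta A (-1) = 0%N.
Proof.
by apply/eqP; rewrite cards_eq0; apply/eqP/setP => i; rewrite !inE (negPf (eta_neqN1 i)) andbF.
Qed.

Lemma fiber_cf_N1 (D L : {set T}) : fiber_card (cf D) L (-1) = #|L :&: D|.
Proof.
apply: eq_card => i; rewrite !inE /cf.
by case: (i \in D); rewrite ?eqxx // (negPf (eta_neqN1 i)).
Qed.

Lemma fiber_cf (D L : {set T}) v :
  v != -1 -> fiber_card (cf D) L v = fiber_card eta (L :\: D) v.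
Proof.
move=> v_neqN1; apply: eq_card => i; rewrite !inE /cf.
by case: (i \in D); rewrite //= eq_sym (negPf v_neqN1) andbF.
Qed.

Lemma cf_fibersE (C D L : {set T}) :
  fiber_card (cf C) L =1 fiber_card (cf D) L <->
  fiber_card eta (L :&: C) =1 fiber_card eta (L :&: D).
Proof.
split => [eq_cf v | eq_eta v]; have [-> | v_neqN1] := eqVneq v (-1).
- by rewrite !fiber_eta_N1.
- apply/eqP; rewrite -(eqn_add2r (fiber_card eta (L :\: C) v)) -fiber_cardID.
  by rewrite -fiber_cf // eq_cf fiber_cf // -fiber_cardID.
- by rewrite !fiber_cf_N1; apply: fibers_card eq_eta.
apply/eqP; rewrite !fiber_cf // -(eqn_add2l (fiber_card eta (L :&: C) v)) -fiber_cardID.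
by rewrite eq_eta -fiber_cardID.
Qed.

Lemma disjoint_below_eq (C D : {set T}) :
  (forall k, [disjoint below k & C] -> [disjoint below k & D] ->
     #|level k :&: C| = #|level k :&: D|) ->
  forall k, [disjoint below k & C] = [disjoint below k & D].
Proof.
move=> eq_cards; elim=> [|k IH].
  have below0 : below 0 = set0 by apply/setP => i; rewrite !inE.
  by rewrite -!setI_eq0 below0 !set0I.
rewrite !disjoint_belowS IH; case dD: [disjoint below k & D] => //=.
by rewrite -!setI_eq0 -!cards_eq0 eq_cards ?IH.
Qed.

Lemma level_fibers_of_terms (C D : {set T}) : dual_ideal le C -> dual_ideal le D ->
  (forall k, level_term C k = level_term D k) ->
  forall k, fiber_card eta (level k :&: C) =1 fiber_card eta (level k :&: D).
Proof.
move=> C_up D_up eq_terms.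
have cf_fibers k : [disjoint below k & C] -> [disjoint below k & D] ->
    fiber_card (cf C) (level k) =1 fiber_card (cf D) (level k).
  move=> dC dD; apply: prod_lin_fibers; move: (eq_terms k); rewrite /level_term dC dD.
  have Xn_neq0 : 'X^#|below k| != 0 :> {poly K} by rewrite expf_neq0 ?polyX_eq0.
  have tau_neq0_below : \prod_(i in below k) tau i != 0 by apply/prodf_neq0 => i _.
  by move/(scalerI tau_neq0_below)/(mulfI Xn_neq0)/addIr.
have eq_disj : forall k, [disjoint below k & C] = [disjoint below k & D].
  by apply: disjoint_below_eq => k dC dD; rewrite -!fiber_cf_N1 (cf_fibers k dC dD).
move=> k; have [dC | ndC] := boolP [disjoint below k & C].
  by apply/cf_fibersE/cf_fibers; rewrite -?eq_disj.
have ndD : ~~ [disjoint below k & D] by rewrite -eq_disj.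
by rewrite !(setIidPl (level_sub_up_closed _ _)).
Qed.

Lemma level_terms_of_fibers (C D : {set T}) :
  (forall k, fiber_card eta (level k :&: C) =1 fiber_card eta (level k :&: D)) ->
  forall k, level_term C k = level_term D k.
Proof.
move=> eq_fibers k.
have eq_disj := disjoint_below_eq (fun k _ _ => fibers_card (eq_fibers k)).
have eq_polys : level_poly C k = level_poly D k.
  exact/(big_fibers_eq _ (fun c : K => 1 + c *: 'X))/cf_fibersE.
by rewrite /level_term eq_disj eq_polys.
Qed.

End Levels.

Theorem proposition3p4 (T : finType) (le : rel T) (K : fieldType)
    (tau eta : T -> K)
    (hP : partial_order le) (hH : hierarchical le)
    (htau : forall i, tau i != 0) (heta : forall i, eta i != -1)
    (D C : {set T}) (hD : dual_ideal le D) (hC : dual_ideal le C) :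
  pi_poly le tau eta [set: T] C = pi_poly le tau eta [set: T] D <->
  exists e : {x : T | x \in C} -> {x : T | x \in D},
    bijective e /\ forall i, eta (sval i) = eta (sval (e i)).
Proof.
split => [/(pi_poly_eqE hP hH) eq_terms | [e [e_bij e_eta]]].
  apply/fibers_sig_bijection/(up_closed_fibersE hP hH eta hC hD).
  exact: level_fibers_of_terms eq_terms.
apply/(pi_poly_eqE hP hH)/(level_terms_of_fibers tau heta).
apply/(up_closed_fibersE hP hH eta hC hD).
exact: sig_bijection_fibers e_bij e_eta.
Qed.
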